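(* Let $X$ be a finite set, $R>1$, $p\in(0,1]$, let $\pi$ be an $R$-spread probability measure on subsets of $X$, and set $\delta=(pR)^{-1/3}$. Let $\mathbb{P}_p$ be the planted model: $\mathbf{A}\sim\pi$, independently $\mathbf{V}\sim\mathbb{Q}_p$, and $\mathbf{Y}=\mathbf{A}\cup\mathbf{V}$. If \[ \mathbb{E}_{\mathbb{P}_p}\big(\mathcal{Z}_{\mathbf{Y}}(\mathbf{A},\delta)\big)\le 6\delta^2, \] then \[ \mathbb{E}_{\mathbb{P}_p}\bigg(\frac{\mathcal{Z}_{\mathbf{Y}}(\mathbf{A},\delta)}{\mathcal{Z}_{\mathbf{Y}}}\bigg)\le 6\delta . \]
   Context: A probability measure $\pi$ on subsets of $X$ is $R$-spread if for every $S\subseteq X$, $\pi(S\subseteq\mathbf{A})\le R^{-|S|}$ for $\mathbf{A}\sim\pi$. $\mathbb{Q}_p$ is the law of the random subset of $X$ containing each element independently with probability $p$. For $Y\subseteq X$ define $\mathcal{Z}_{Y}=\sum_{A'\subseteq X}\pi(A')\,\mathbf{1}\{A'\subseteq Y\}\,p^{-|A'|}$, and for $A\subseteq X$ define $\mathcal{Z}_{Y}(A,\delta)=\sum_{A'\subseteq X:\,|A\cap A'|>\delta|A|}\pi(A')\,\mathbf{1}\{A'\subseteq Y\}\,p^{-|A'|}$. *)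

From HB Require Import structures.
From mathcomp Require Import all_boot all_order all_algebra.
From mathcomp Require Import all_classical all_reals all_analysis.
Set Implicit Arguments. Unset Strict Implicit. Unset Printing Implicit Defensive.
Import Order.TTheory GRing.Theory Num.Theory.
Local Open Scope ring_scope.

Section Defs.
Variables (K : realType) (X : finType).

Definition is_prob (pi : {set X} -> K) : Prop :=
  (forall A, 0 <= pi A) /\ \sum_(A : {set X}) pi A = 1.

Definition spread (Rs : K) (pi : {set X} -> K) : Prop :=
  forall S : {set X}, \sum_(A : {set X} | S \subset A) pi A <= Rs ^- #|S|.

Definition Qp (p : K) (V : {set X}) : K := p ^+ #|V| * (1 - p) ^+ (#|X| - #|V|).

Definition ZY (pi : {set X} -> K) (p : K) (Y : {set X}) : K :=
  \sum_(A' : {set X} | A' \subset Y) pi A' * p ^- #|A'|.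

Definition ZYd (pi : {set X} -> K) (p : K) (Y A : {set X}) (delta : K) : K :=
  \sum_(A' : {set X} | (A' \subset Y) && (delta * #|A|%:R < #|A :&: A'|%:R))
     pi A' * p ^- #|A'|.

Definition planted_E (pi : {set X} -> K) (p : K) (f : {set X} -> {set X} -> K) : K :=
  \sum_(A : {set X}) \sum_(V : {set X}) pi A * Qp p V * f A (A :|: V).

End Defs.

From mathcomp Require Import all_boot all_order all_algebra.
From mathcomp Require Import all_classical all_reals all_analysis.
From mathcomp Require Import ring lra.
Set Implicit Arguments. Unset Strict Implicit. Unset Printing Implicit Defensive.
Import Order.TTheory GRing.Theory Num.Theory.
Local Open Scope ring_scope.

(* Since V ~ Q_p is independent of A, the planted law of Y = A :|: V is
   Q_p(Y) * Z_Y (for p > 0); hence P(Z_Y < t) = E_{Q_p}[Z_Y 1{Z_Y < t}] <= t.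
   As Z_Y(A, delta) <= Z_Y, the ratio is at most 1{Z_Y < t} + Z_Y(A, delta) / t,
   and taking expectations with t = 3 delta gives 3 delta + 2 delta. *)

Section ProductMeasure.
Variables (K : realType) (X : finType).
Implicit Types (p : K) (A B V Y : {set X}).

Lemma QpE p V : Qp p V = \prod_i (if i \in V then p else 1 - p).
Proof.
rewrite /Qp (bigID (mem V)) /=; congr (_ * _).
  by rewrite (eq_bigr (fun=> p)) => [|i -> //]; rewrite prodr_const.
rewrite (eq_bigr (fun=> 1 - p)) => [|i /negbTE -> //].
rewrite prodr_const -(cardC V) addKn.
by congr (_ ^+ _); apply: eq_card => i; rewrite !inE.
Qed.

Lemma Qp_ge0 p V : 0 <= p -> p <= 1 -> 0 <= Qp p V.
Proof. by move=> p0 p1; rewrite mulr_ge0 ?exprn_ge0 ?subr_ge0. Qed.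

Lemma sum_set_prod (F : X -> bool -> K) :
  \sum_(V : {set X}) \prod_i F i (i \in V) = \prod_i (F i true + F i false).
Proof.
rewrite bigA_distr; apply: eq_bigr => V _.
by apply: eq_bigr => i _; case: (i \in V).
Qed.

Lemma sum_Qp p : \sum_(V : {set X}) Qp p V = 1.
Proof.
under eq_bigr => V _ do rewrite QpE.
rewrite (sum_set_prod (fun _ b => if b then p else 1 - p)).
by rewrite big1 // => i _; rewrite addrC subrK.
Qed.

Lemma eq_set_prod A B : (A == B)%:R = \prod_i ((i \in A) == (i \in B))%:R :> K.
Proof.
have [->|neqAB] := eqVneq A B; first by rewrite big1 // => i _; rewrite eqxx.
have [i neq_i] : exists i, (i \in A) != (i \in B).
  apply/existsP; move: neqAB; apply: contraNT => /existsPn eq_AB.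
  by apply/eqP/setP => i; apply/eqP/negPn/eq_AB.
by rewrite (bigD1 i) //= (negbTE neq_i) mul0r.
Qed.

Lemma sum_Qp_setU p A Y : p != 0 ->
  \sum_V (A :|: V == Y)%:R * Qp p V = (A \subset Y)%:R * p ^- #|A| * Qp p Y.
Proof.
move=> p_neq0.
pose F i b := ((i \in Y) == ((i \in A) || b))%:R * (if b then p else 1 - p).
have -> : \sum_V (A :|: V == Y)%:R * Qp p V = \prod_i (F i true + F i false).
  rewrite -sum_set_prod; apply: eq_bigr => V _.
  rewrite eq_set_prod QpE -big_split; apply: eq_bigr => i _.
  by rewrite finset.in_setU eq_sym.
rewrite {}/F; under eq_bigr => i _ do rewrite orbT orbF eqb_id.
have [AY | /fintype.subsetPn [i iA iNY]] := boolP (A \subset Y); last first.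
  by rewrite (bigD1 i) //= iA (negbTE iNY) /= !mul0r add0r !mul0r.
rewrite mul1r QpE (bigID (mem A)) [in RHS](bigID (mem A)) /=.
rewrite [in RHS](eq_bigr (fun=> p)) => [|i /(fintype.subsetP AY) -> //].
rewrite prodr_const mulrA mulVf ?expf_neq0 // mul1r big1 => [|i iA]; last first.
  by rewrite iA (fintype.subsetP AY i iA) !mul1r addrC subrK.
rewrite mul1r; apply: eq_bigr => i /negbTE ->.
by case: (i \in Y); rewrite /= ?mul1r ?mul0r ?add0r ?addr0.
Qed.

Lemma planted_E_QpZY (pi : {set X} -> K) p (g : {set X} -> K) : p != 0 ->
  planted_E pi p (fun _ Y => g Y) = \sum_Y Qp p Y * ZY pi p Y * g Y.
Proof.
move=> p_neq0.
have fibre A V : g (A :|: V) = \sum_Y (A :|: V == Y)%:R * g Y.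
  rewrite (bigD1 (A :|: V)) //= eqxx mul1r big1 ?addr0 // => Y /negbTE.
  by rewrite eq_sym => ->; rewrite mul0r.
transitivity (\sum_A \sum_Y pi A * g Y * \sum_V (A :|: V == Y)%:R * Qp p V).
  apply: eq_bigr => A _; under eq_bigr => V _ do rewrite fibre big_distrr /=.
  rewrite exchange_big; apply: eq_bigr => Y _; rewrite big_distrr.
  by apply: eq_bigr => V _ /=; ring.
rewrite exchange_big; apply: eq_bigr => Y _.
rewrite /ZY [in RHS]big_mkcond big_distrr big_distrl /=; apply: eq_bigr => A _.
by rewrite sum_Qp_setU //; case: (A \subset Y); rewrite /= ?mul0r ?mulr0 //; ring.
Qed.

End ProductMeasure.

Lemma ratio_le_indicator (R : realFieldType) (d z t : R) :
  0 <= d <= z -> 0 < t -> d / z <= (z < t)%R%:R + d / t.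
Proof.
case/andP=> d_ge0 dz t_gt0; have dt_ge0 : 0 <= d / t := divr_ge0 d_ge0 (ltW t_gt0).
have [_ | tz] /= := ltP z t.
  apply: le_trans (_ : 1 <= _); last by rewrite lerDl.
  have [->|z_neq0] := eqVneq z 0; first by rewrite invr0 mulr0.
  by rewrite ler_pdivrMr ?mul1r // lt_neqAle eq_sym z_neq0 (le_trans d_ge0).
by rewrite add0r ler_wpM2l // lef_pV2 ?posrE // (lt_le_trans t_gt0).
Qed.

Section Planted.
Variables (K : realType) (X : finType) (p : K) (pi : {set X} -> K).
Hypotheses (p_gt0 : 0 < p) (p_le1 : p <= 1) (pi_ge0 : forall A, 0 <= pi A).
Implicit Types (f g : {set X} -> {set X} -> K) (A Y : {set X}).

Let p_ge0 : 0 <= p. Proof. exact: ltW. Qed.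

Let expVp_ge0 k : 0 <= p ^- k. Proof. by rewrite invr_ge0 exprn_ge0. Qed.

Lemma ler_planted_E f g :
  (forall A Y, f A Y <= g A Y) -> planted_E pi p f <= planted_E pi p g.
Proof.
move=> le_fg; apply: ler_sum => A _; apply: ler_sum => V _.
exact: (ler_wpM2l (mulr_ge0 (pi_ge0 A) (Qp_ge0 V p_ge0 p_le1)) (le_fg A _)).
Qed.

Lemma planted_ED f g :
  planted_E pi p (fun A Y => f A Y + g A Y) = planted_E pi p f + planted_E pi p g.
Proof.
rewrite /planted_E -big_split; apply: eq_bigr => A _.
by rewrite -big_split; apply: eq_bigr => V _; rewrite mulrDr.
Qed.

Lemma planted_EMr f c :
  planted_E pi p (fun A Y => f A Y * c) = planted_E pi p f * c.
Proof.
rewrite /planted_E mulr_suml; apply: eq_bigr => A _.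
by rewrite mulr_suml; apply: eq_bigr => V _; rewrite mulrA.
Qed.

Lemma ZYd_ge0 Y A delta : 0 <= ZYd pi p Y A delta.
Proof. by apply: sumr_ge0 => B _; rewrite mulr_ge0. Qed.

Lemma ZYd_le_ZY Y A delta : ZYd pi p Y A delta <= ZY pi p Y.
Proof.
rewrite /ZY (bigID (fun B => delta * #|A|%:R < #|A :&: B|%:R)) /= lerDl.
by apply: sumr_ge0 => B _; rewrite mulr_ge0.
Qed.

Lemma planted_E_ZY_lt t : 0 <= t ->
  planted_E pi p (fun _ Y => (ZY pi p Y < t)%R%:R) <= t.
Proof.
move=> t_ge0; rewrite planted_E_QpZY ?gt_eqF //.
apply: (@le_trans _ _ (\sum_Y Qp p Y * t)); last by rewrite -mulr_suml sum_Qp mul1r.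
apply: ler_sum => Y _; rewrite -mulrA ler_wpM2l ?Qp_ge0 //.
by case: ltP => /= [/ltW|_]; rewrite ?mulr1 ?mulr0.
Qed.

Lemma planted_E_ratio_le delta t : 0 < t ->
  planted_E pi p (fun A Y => ZYd pi p Y A delta / ZY pi p Y) <=
  t + planted_E pi p (fun A Y => ZYd pi p Y A delta) / t.
Proof.
move=> t_gt0.
apply: le_trans (ler_planted_E (fun A Y => ratio_le_indicator _ t_gt0)) _.
  by move=> A Y; rewrite ZYd_ge0 ZYd_le_ZY.
by rewrite planted_ED planted_EMr lerD2r planted_E_ZY_lt ?ltW.
Qed.

End Planted.

Theorem lemma4 (K : realType) (X : finType) (Rs p : K) (pi : {set X} -> K) :
  1 < Rs -> 0 < p -> p <= 1 ->
  is_prob pi -> spread Rs pi ->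
  let delta := (p * Rs) `^ (- (1 / 3)) in
  planted_E pi p (fun A Y => ZYd pi p Y A delta) <= 6 * delta ^+ 2 ->
  planted_E pi p (fun A Y => ZYd pi p Y A delta / ZY pi p Y) <= 6 * delta.
Proof.
(* Spreadness and the value of delta only enter through the assumed bound. *)
move=> Rs_gt1 p_gt0 p_le1 [pi_ge0 _] _ delta E_ZYd.
have delta_gt0 : 0 < delta by rewrite powR_gt0 // mulr_gt0 // (lt_trans ltr01).
have t_gt0 : 0 < 3 * delta by rewrite mulr_gt0.
apply: le_trans (planted_E_ratio_le p_gt0 p_le1 pi_ge0 delta t_gt0) _.
have : planted_E pi p (fun A Y => ZYd pi p Y A delta) / (3 * delta) <= 2 * delta.
  by rewrite ler_pdivrMr //; apply: le_trans E_ZYd _; rewrite expr2; nra.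
lra.
Qed.
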